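(* Let $C$ be a complete structured DNNF and $g$ a $\cup$-gate of $C$. The following procedure $\mathrm{Enum}(g)$ enumerates $S(g)$ (possibly with duplicates) with delay $O(\mathrm{depth}(C)\times|S|)$, where $S$ is the produced assignment: traverse, by a naive preorder traversal following wires backwards from $g$ through $\cup$-gates only, the gates $g'\in\downarrow g$ (each $g'$ possibly reached once per path); for each such $g'$, if $g'$ is a var-gate output $S_{\mathrm{var}}(g')$, and if $g'$ is a $\times$-gate with left input $g_L$ and right input $g_R$, then for each $S_L$ output by $\mathrm{Enum}(g_L)$ and each $S_R$ output by $\mathrm{Enum}(g_R)$ (nested, with recursive enumerations run lazily, resuming only when the next value is requested) output $S_L\cup S_R$.
   Context: A set circuit $C=(G,W,\mu)$ is a finite DAG with gates $G$, wires $W\subseteq G\times G$, gate types $\mu(g)\in\{\top,\bot,\mathrm{var},\times,\cup\}$, and an injective map $S_{\mathrm{var}}$ giving each var-gate a set of variables; $C_{\mathrm{var}}$ is the union of all $S_{\mathrm{var}}(g)$. Inputs of $g$ are the $g'$ with $(g',g)\in W$; $\top,\bot,\mathrm{var}$-gates have no inputs, $\times$-gates exactly two, $\cup$-gates at least one, and $\top,\bot$-gates are never inputs. Captured sets: $S(g)=\{S_{\mathrm{var}}(g)\}$ for var-gates, $\emptyset$ for $\bot$, $\{\emptyset\}$ for $\top$, $\{S_1\cup S_2\mid S_1\in S(g_1),S_2\in S(g_2)\}$ for a $\times$-gate with inputs $g_1,g_2$, the union over inputs for $\cup$-gates. Depth is the maximal length of a directed path. For a $\cup$-gate $g$, write $g'\overset{\cup}{\leadsto}g$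 if there is a directed path of wires from $g'$ to $g$ all of whose gates other than $g'$ are $\cup$-gates, and $\downarrow g$ is the set of var- and $\times$-gates $g'$ with $g'\overset{\cup}{\leadsto}g$. A v-tree for $C$ is a binary tree whose leaves are labeled by sets of variables partitioning $C_{\mathrm{var}}$; a structuring function $\sigma$ maps gates to v-tree nodes so that each var-gate $g$ goes to a leaf whose label contains $S_{\mathrm{var}}(g)$, for each wire $(g',g)$ either $\sigma(g')=\sigma(g)$ or $g'$ is a $\cup$-gate with $\sigma(g')$ a child of $\sigma(g)$, and each $\times$-gate $g$ has a left input mapped to the left child and a right input mapped to the right child of $\sigma(g)$. A complete structured DNNF is a set circuit with a v-tree and structuring function. Delay is the maximal time before the first output, between consecutive outputs, and after the last. *)

From HB Require Import structures.
From mathcomp Require Import all_boot.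
Set Implicit Arguments. Unset Strict Implicit. Unset Printing Implicit Defensive.

Inductive gtype := GTop | GBot | GVar | GTimes | GUnion.

Definition gtype_eqb (a b : gtype) : bool :=
  match a, b with
  | GTop, GTop | GBot, GBot | GVar, GVar | GTimes, GTimes | GUnion, GUnion => true
  | _, _ => false end.
Lemma gtype_eqP : Equality.axiom gtype_eqb.
Proof. by case; case; constructor. Qed.
HB.instance Definition _ := hasDecEq.Build gtype gtype_eqP.

(* A set circuit with gates G and variables X.
   [wire g' g] means (g', g) \in W, i.e. g' is an input of g.
   [svar g] is S_var(g); it is only meaningful for var-gates. *)
Record set_circuit (G X : finType) := SetCircuit {
  wire : rel G;
  mu   : G -> gtype;
  svar : G -> {set X}
}.

Section Circuits.
Variables (G X : finType) (C : set_circuit G X).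

Definition inputs (g : G) : {set G} := [set g' | wire C g' g].

Definition wf_circuit : Prop :=
  [/\
      (forall g g', wire C g' g -> ~~ connect (wire C) g g'),
      (forall g1 g2, mu C g1 = GVar -> mu C g2 = GVar ->
                     svar C g1 = svar C g2 -> g1 = g2),
      (forall g, mu C g \in [:: GTop; GBot; GVar] -> inputs g = set0),
      (forall g, mu C g = GTimes -> #|inputs g| = 2) /\
      (forall g, mu C g = GUnion -> 0 < #|inputs g|) &
      (forall g' g, mu C g' \in [:: GTop; GBot] -> ~~ wire C g' g)].

Definition Cvar : {set X} := \bigcup_(g | mu C g == GVar) svar C g.

(* Captured sets: [captures g S] iff S \in S(g) (least fixpoint of the
   defining equations, well-defined since C is a DAG). *)
Inductive captures : G -> {set X} -> Prop :=
| capt_var g : mu C g = GVar -> captures g (svar C g)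
| capt_top g : mu C g = GTop -> captures g set0
| capt_times g g1 g2 S1 S2 : mu C g = GTimes ->
    wire C g1 g -> wire C g2 g -> g1 != g2 ->
    captures g1 S1 -> captures g2 S2 -> captures g (S1 :|: S2)
| capt_union g g' S : mu C g = GUnion -> wire C g' g ->
    captures g' S -> captures g S.

Definition is_depth (d : nat) : Prop :=
  (exists g (p : seq G), path (wire C) g p /\ size p = d) /\
  (forall g (p : seq G), path (wire C) g p -> size p <= d).

End Circuits.

Inductive vtree (X : finType) :=
| VLeaf of {set X}
| VNode of vtree X & vtree X.

(* Nodes of a v-tree are addressed by paths from the root:
   false = go to the left child, true = go to the right child. *)
Fixpoint subtree_at (X : finType) (t : vtree X) (p : seq bool) : option (vtree X) :=
  match p with
  | [::] => Some t
  | b :: p' => match t with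
               | VLeaf _ => None
               | VNode l r => subtree_at (if b then r else l) p'
               end
  end.

Fixpoint vleaves (X : finType) (t : vtree X) : seq {set X} :=
  match t with
  | VLeaf L => [:: L]
  | VNode l r => vleaves l ++ vleaves r
  end.

Definition lchild (p : seq bool) := rcons p false.
Definition rchild (p : seq bool) := rcons p true.

Section Structured.
Variables (G X : finType) (C : set_circuit G X).

Definition vtree_for (t : vtree X) : Prop :=
  (forall i j, i < j < size (vleaves t) ->
     [disjoint nth set0 (vleaves t) i & nth set0 (vleaves t) j]) /\
  \bigcup_(L <- vleaves t) L = Cvar C.

Definition structuring (t : vtree X) (sigma : G -> seq bool) : Prop :=
  [/\ (forall g, subtree_at t (sigma g) <> None),
      (forall g, mu C g = GVar ->
         exists L, subtree_at t (sigma g) = Some (VLeaf L) /\ svar C g \subset L),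
      (forall g' g, wire C g' g ->
         sigma g' = sigma g \/
         (mu C g' = GUnion /\
          (sigma g' = lchild (sigma g) \/ sigma g' = rchild (sigma g)))) &
      (forall g, mu C g = GTimes ->
         exists gL gR, [/\ wire C gL g, wire C gR g,
                           sigma gL = lchild (sigma g) & sigma gR = rchild (sigma g)])].

End Structured.

(* A trace of a run: [Tick] is one unit of work, [Out S] outputs S. *)
Inductive event (X : finType) := Tick | Out of {set X}.
Arguments Tick {X}.

Definition outputs (X : finType) (tr : seq (event X)) : seq {set X} :=
  pmap (fun e => if e is Out A then Some A else None) tr.

(* Writing out a set S costs |S| unit steps, then S is output. *)
Definition out_ev (X : finType) (A : {set X}) : seq (event X) :=
  rcons (nseq #|A| Tick) (Out A).

(* Lazy nested loop: run Enum(g_L); each time it outputs S_L (one step to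
   resume), run Enum(g_R) afresh; each time it outputs S_R, build and
   output S_L \cup S_R (cost |S_L \cup S_R| + 1). All work done by the
   recursive enumerations is kept in the trace. *)
Definition nest (X : finType) (tL tR : seq (event X)) : seq (event X) :=
  flatten [seq match e with
               | Tick => [:: Tick]
               | Out SL => Tick :: flatten [seq match e' with
                                               | Tick => [:: Tick]
                                               | Out SR => out_ev (SL :|: SR)
                                               end | e' <- tR]
               end | e <- tL].

Section Enum.
Variables (G X : finType) (C : set_circuit G X) (sigma : G -> seq bool).

Definition left_input (g : G) : option G :=
  [pick g' | wire C g' g && (sigma g' == lchild (sigma g))].
Definition right_input (g : G) : option G :=
  [pick g' | wire C g' g && (sigma g' == rchild (sigma g))].

(* [visit n h]: visiting gate h (one step on entry, one on exit); union-gates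
   are traversed by following all their input wires backwards (naive
   preorder, in the enumeration order of G), var-gates output S_var, and
   times-gates run the nested lazy enumeration of their left/right inputs.
   n is fuel; n = #|G| is always enough on a DAG (recursion depth is at
   most depth(C) + 1 <= #|G|). *)
Fixpoint visit (n : nat) (h : G) : seq (event X) :=
  if n is n'.+1 then
    Tick :: (match mu C h with
             | GUnion => flatten [seq visit n' h' | h' <- enum (fun h' => wire C h' h)]
             | GVar => out_ev (svar C h)
             | GTimes => match left_input h, right_input h with
                         | Some gL, Some gR => nest (visit n' gL) (visit n' gR)
                         | _, _ => [::]
                         end
             | _ => [::]
             end) ++ [:: Tick]
  else [::].

Definition Enum (g : G) : seq (event X) := visit #|G| g.

End Enum.

(* Delay check.  [prev] is the size of the previously output set (0 at the
   start), [acc] the number of steps since the last output.  The gap before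
   an output S must be <= B(|S_prev| + |S|) (B(|S|) for the first output),
   the gap after the last output S_last must be <= B(|S_last|). *)
Fixpoint gaps_ok (X : finType) (B : nat -> nat) (acc prev : nat)
    (tr : seq (event X)) : bool :=
  match tr with
  | [::] => acc <= B prev
  | Tick :: tr' => gaps_ok B acc.+1 prev tr'
  | Out A :: tr' => (acc <= B (prev + #|A|)) && gaps_ok B 0 #|A| tr'
  end.

Definition delay_bounded (X : finType) (B : nat -> nat) (tr : seq (event X)) : bool :=
  gaps_ok B 0 0 tr.

(* Weight every output S of the enumeration by #|S|, plus one if S is derived through the
   var-gate with empty S_var (there is at most one, S_var being injective).  The two inputs of a
   times-gate are structured by disjoint subtrees of the v-tree, so weights add up along products
   and never exceed #|S| + 1.  By induction on the height k of a gate, the gap between consecutive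
   outputs of weights w and w' is at most (3k + 2)(w + w'): a union-gate concatenates the runs of
   its inputs, and in the lazy nested loop of a times-gate the gap of the left run together with
   the tail and the head of two consecutive right runs is charged to the left and right factors of
   the two surrounding outputs, whose weights add up exactly; resuming, writing out S_L :|: S_R and
   the entry and exit steps only add a constant to the factor. *)

From mathcomp Require Import all_boot zify.
Set Implicit Arguments. Unset Strict Implicit. Unset Printing Implicit Defensive.

Section WeightedTraces.
Variable X : finType.

Inductive wevent := WTick | WOut of {set X} & nat.

Definition unweight (t : seq wevent) : seq (event X) :=
  map (fun e => if e is WOut A _ then Out A else Tick) t.

Definition wouts (t : seq wevent) : seq ({set X} * nat) :=
  pmap (fun e => if e is WOut A w then Some (A, w) else None) t.

(* [a] steps have elapsed since the previous output, whose weight is [pw] ([0] if there is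
   none). *)
Fixpoint wgaps_ok (m a pw : nat) (t : seq wevent) : bool :=
  match t with
  | [::] => true
  | WTick :: t' => wgaps_ok m a.+1 pw t'
  | WOut _ w :: t' => (a <= m * (pw + w)) && wgaps_ok m 0 w t'
  end.

Fixpoint wfinal (a pw : nat) (t : seq wevent) : nat * nat :=
  match t with
  | [::] => (a, pw)
  | WTick :: t' => wfinal a.+1 pw t'
  | WOut _ w :: t' => wfinal 0 w t'
  end.

Record wdelay (m : nat) (t : seq wevent) : Prop := WDelay {
  wdelay_gaps : wgaps_ok m 0 0 t;
  wdelay_last : (wfinal 0 0 t).1 <= m * (wfinal 0 0 t).2;
  wdelay_outs : wouts t != [::];
  wdelay_gt0 : all (fun p => 0 < p.2) (wouts t);
  wdelay_card : all (fun p : {set X} * nat => #|p.1| <= p.2) (wouts t) }.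

Lemma outputs_unweight t : outputs (unweight t) = map fst (wouts t).
Proof. by elim: t => [|[|A w] t IH] //=; rewrite /outputs /= -/(outputs _) IH. Qed.

Lemma wouts_cat t1 t2 : wouts (t1 ++ t2) = wouts t1 ++ wouts t2.
Proof. exact: pmap_cat. Qed.

Lemma wouts_flatten ts : wouts (flatten ts) = flatten (map wouts ts).
Proof. by elim: ts => //= t ts IH; rewrite wouts_cat IH. Qed.

Lemma wouts_ticks k : wouts (nseq k WTick) = [::].
Proof. by elim: k. Qed.

Lemma wgaps_ok_cat m a pw t1 t2 :
  wgaps_ok m a pw (t1 ++ t2) =
  wgaps_ok m a pw t1 && wgaps_ok m (wfinal a pw t1).1 (wfinal a pw t1).2 t2.
Proof. by elim: t1 a pw => [|[|A w] t1 IH] a pw //=; rewrite IH ?andbA. Qed.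

Lemma wfinal_cat a pw t1 t2 :
  wfinal a pw (t1 ++ t2) = wfinal (wfinal a pw t1).1 (wfinal a pw t1).2 t2.
Proof. by elim: t1 a pw => [|[|A w] t1 IH] a pw //=. Qed.

Lemma wgaps_ok_ticks m a pw k t :
  wgaps_ok m a pw (nseq k WTick ++ t) = wgaps_ok m (a + k) pw t.
Proof. by elim: k a => [|k IH] a /=; rewrite ?addn0 // IH addnS. Qed.

Lemma wfinal_ticks a pw k t : wfinal a pw (nseq k WTick ++ t) = wfinal (a + k) pw t.
Proof. by elim: k a => [|k IH] a /=; rewrite ?addn0 // IH addnS. Qed.

Lemma wfinal_indep a pw a' pw' t : wouts t != [::] -> wfinal a pw t = wfinal a' pw' t.
Proof. by elim: t a pw a' pw' => [|[|A w] t IH] a pw a' pw' //=; apply: IH. Qed.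

Lemma wfinal_silent a pw t : wouts t = [::] -> wfinal a pw t = (a + size t, pw).
Proof.
elim: t a => [|[|A w] t IH] a //= => [|/IH ->]; by rewrite ?addn0 ?addnS.
Qed.

Lemma wfinal_gt0 a pw t :
  all (fun p => 0 < p.2) (wouts t) -> wouts t != [::] -> 0 < (wfinal a pw t).2.
Proof.
elim: t a pw => [|[|A w] t IH] a pw //=; first exact: IH.
case/andP=> w_gt0 t_gt0 _; have [t_silent|t_outs] := eqVneq (wouts t) [::].
  by rewrite wfinal_silent.
exact: IH.
Qed.

Lemma wgaps_ok_mono m m' a pw t : m <= m' -> wgaps_ok m a pw t -> wgaps_ok m' a pw t.
Proof.
move=> le_mm'; elim: t a pw => [|[|A w] t IH] a pw //=; first exact: IH.
case/andP=> gap_ok t_ok; rewrite IH // andbT (leq_trans gap_ok) // leq_mul2r le_mm'.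
by rewrite orbT.
Qed.

Lemma wgaps_ok_shift m b a pw t :
  wgaps_ok m b 0 t -> a <= m * pw -> wgaps_ok m (b + a) pw t.
Proof.
elim: t b => [|[|A w] t IH] b //= => [t_ok le_a|/andP[gap_ok t_ok] le_a].
  by rewrite -addSn IH.
by rewrite t_ok andbT mulnDr; lia.
Qed.

Lemma wgaps_ok_tick m a pw t :
  all (fun p => 0 < p.2) (wouts t) -> wgaps_ok m a pw t -> wgaps_ok m.+1 a.+1 pw t.
Proof.
elim: t a pw => [|[|A w] t IH] a pw //=; first exact: IH.
case/andP=> w_gt0 t_gt0 /andP[gap_ok t_ok]; apply/andP; split.
  by rewrite mulSn; lia.
exact: wgaps_ok_mono t_ok.
Qed.

Lemma wdelay_mono m m' t : m <= m' -> wdelay m t -> wdelay m' t.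
Proof.
move=> le_mm' [gaps last outs gt0 card]; split => //; first exact: wgaps_ok_mono gaps.
by rewrite (leq_trans last) // leq_mul2r le_mm' orbT.
Qed.

Lemma wdelay_out m (A : {set X}) w :
  #|A| <= w -> 0 < w -> #|A| <= m * w -> wdelay m (rcons (nseq #|A| WTick) (WOut A w)).
Proof.
move=> card_le w_gt0 card_le_mw; split;
  rewrite -cats1 ?wouts_cat ?wouts_ticks ?wgaps_ok_ticks ?wfinal_ticks //=.
- by rewrite card_le_mw.
- by rewrite w_gt0.
- by rewrite card_le.
Qed.

Definition bracket (t : seq wevent) := WTick :: t ++ [:: WTick].

Lemma wouts_bracket t : wouts (bracket t) = wouts t.
Proof. by rewrite /bracket /= wouts_cat cats0. Qed.

Lemma wdelay_bracket m t : wdelay m t -> wdelay m.+1 (bracket t).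
Proof.
move=> [gaps last outs gt0 card]; split; rewrite ?wouts_bracket //=.
  by rewrite wgaps_ok_cat andbT wgaps_ok_tick.
rewrite wfinal_cat (wfinal_indep 1 0 0 0 outs) /=.
have := wfinal_gt0 0 0 gt0 outs; move: last.
by case: (wfinal 0 0 t) => ticks w /=; rewrite mulSn; lia.
Qed.

Lemma wdelay_flatten (I : eqType) (s : seq I) (f : I -> seq wevent) m :
  s != [::] -> {in s, forall i, wdelay m (f i)} -> wdelay m (flatten (map f s)).
Proof.
move=> s_nil s_delay.
have gaps_from a pw : a <= m * pw ->
    wgaps_ok m a pw (flatten (map f s)) &&
    ((wfinal a pw (flatten (map f s))).1 <= m * (wfinal a pw (flatten (map f s))).2).
  elim: s {s_nil} s_delay a pw => [|i s IH] /= s_delay a pw le_a; first by rewrite le_a.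
  have [gaps _ outs _ _] := s_delay i (mem_head i s).
  rewrite wgaps_ok_cat wfinal_cat -[a]add0n wgaps_ok_shift //=.
  rewrite (wfinal_indep (0 + a) pw 0 0 outs); apply: IH.
    by move=> j j_s; apply: s_delay; rewrite inE j_s orbT.
  exact: wdelay_last (s_delay i (mem_head i s)).
have /andP[gaps last] := gaps_from 0 0 (leq0n _).
split; rewrite // wouts_flatten -map_comp.
- case: s s_nil s_delay {gaps_from gaps last} => // i s _ s_delay /=.
  by case: (s_delay i (mem_head i s)) => _ _; case: (wouts (f i)).
- by apply/allP => p /flattenP[_ /mapP[i /s_delay[_ _ _ gt0 _] ->]]; apply: (allP gt0).
- by apply/allP => p /flattenP[_ /mapP[i /s_delay[_ _ _ _ card] ->]]; apply: (allP card).
Qed.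

Definition wcombine (SL : {set X}) (wl : nat) (tR : seq wevent) : seq wevent :=
  flatten [seq if e is WOut SR wr
               then rcons (nseq #|SL :|: SR| WTick) (WOut (SL :|: SR) (wl + wr))
               else [:: WTick] | e <- tR].

Definition wnest (tL tR : seq wevent) : seq wevent :=
  flatten [seq if e is WOut SL wl then WTick :: wcombine SL wl tR else [:: WTick]
          | e <- tL].

Lemma unweight_wnest tL tR : unweight (wnest tL tR) = nest (unweight tL) (unweight tR).
Proof.
rewrite /unweight /wnest /nest map_flatten -!map_comp; congr flatten.
apply: eq_map => -[|SL wl] //=; congr cons.
rewrite /wcombine map_flatten -!map_comp; congr flatten.
by apply: eq_map => -[|SR wr] //=; rewrite /out_ev map_rcons map_nseq.
Qed.

Lemma wcombine_cons SL wl e tR :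
  wcombine SL wl (e :: tR) =
  (if e is WOut SR wr then rcons (nseq #|SL :|: SR| WTick) (WOut (SL :|: SR) (wl + wr))
   else [:: WTick]) ++ wcombine SL wl tR.
Proof. by []. Qed.

Lemma wouts_wcombine SL wl tR :
  wouts (wcombine SL wl tR) = [seq (SL :|: p.1, wl + p.2) | p <- wouts tR].
Proof.
elim: tR => [|[|SR wr] tR IH] //; rewrite wcombine_cons wouts_cat IH //.
by rewrite -cats1 wouts_cat wouts_ticks.
Qed.

Lemma wouts_wnest tL tR :
  wouts (wnest tL tR) = [seq (p.1 :|: q.1, p.2 + q.2) | p <- wouts tL, q <- wouts tR].
Proof.
elim: tL => [|[|SL wl] tL IH] //.
by rewrite /wnest /= -/(wnest tL tR) wouts_cat IH wouts_wcombine.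
Qed.

Lemma wcombine_silent SL wl tR : wouts tR = [::] -> wcombine SL wl tR = tR.
Proof. by elim: tR => [|[|SR wr] tR IH] //= silent; rewrite wcombine_cons IH. Qed.

Lemma wfinal_wcombine SL wl tR a pw a' pw' : wouts tR != [::] ->
  wfinal a' pw' (wcombine SL wl tR) = ((wfinal a pw tR).1, wl + (wfinal a pw tR).2).
Proof.
elim: tR a pw a' pw' => [|[|SR wr] tR IH] a pw a' pw' //; rewrite wcombine_cons /= => outs.
  by rewrite (IH a.+1 pw).
rewrite cat_rcons wfinal_ticks /=.
have [silent|] := eqVneq (wouts tR) [::]; last exact: IH.
by rewrite wcombine_silent // !wfinal_silent.
Qed.

Lemma wgaps_ok_wcombine m (SL : {set X}) wl tR a pw a' pw' :
  wgaps_ok m a pw tR -> all (fun p : {set X} * nat => #|p.1| <= p.2) (wouts tR) ->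
  #|SL| <= wl -> a' + m * pw <= a + m.+2 * pw' + m.+1 * wl ->
  wgaps_ok m.+2 a' pw' (wcombine SL wl tR).
Proof.
elim: tR a pw a' pw' => [|[|SR wr] tR IH] a pw a' pw' //; rewrite wcombine_cons /=.
  by move=> t_ok card card_SL credit; apply: (IH a.+1 pw) => //; lia.
case/andP=> gap_ok t_ok /andP[card_SR card] card_SL credit.
rewrite cat_rcons wgaps_ok_ticks /=; apply/andP; split.
  have := (leq_card_setU SL SR).1; move: gap_ok credit; rewrite !mulnDr !mulSn; lia.
by apply: (IH 0 wr) => //; rewrite !mulnDr !mulSn; lia.
Qed.

Lemma wgaps_ok_wnest m tR tL aL pwL a' pw' : wdelay m tR ->
  wgaps_ok m aL pwL tL -> all (fun p => 0 < p.2) (wouts tL) ->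
  all (fun p : {set X} * nat => #|p.1| <= p.2) (wouts tL) ->
  a' + m * pwL <= aL + m.+2 * pw' ->
  wgaps_ok m.+2 a' pw' (wnest tL tR) /\
  (wfinal a' pw' (wnest tL tR)).1 + m * (wfinal aL pwL tL).2 <=
  (wfinal aL pwL tL).1 + m.+2 * (wfinal a' pw' (wnest tL tR)).2.
Proof.
move=> [gapsR lastR outsR _ cardR].
elim: tL aL pwL a' pw' => [|[|SL wl] tL IH] aL pwL a' pw' //=.
  by move=> tL_ok gt0 card credit; apply: IH => //; lia.
case/andP=> gap_ok tL_ok /andP[wl_gt0 gt0] /andP[card_SL card] credit.
rewrite /wnest /= -/(wnest tL tR) wgaps_ok_cat wfinal_cat.
rewrite (wfinal_wcombine SL wl 0 0 _ _ outsR) (wgaps_ok_wcombine (a := 0) (pw := 0)) //=.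
  apply: IH => //; move: lastR; case: (wfinal 0 0 tR) => ticks w /=.
  by rewrite !mulnDr !mulSn; lia.
by move: gap_ok credit; rewrite !mulnDr !mulSn; lia.
Qed.

Lemma wdelay_wnest m tL tR : wdelay m tL -> wdelay m tR -> wdelay m.+2 (wnest tL tR).
Proof.
move=> [gapsL lastL outsL gt0L cardL] delayR.
have [_ _ outsR gt0R cardR] := delayR.
have [|gaps last] := wgaps_ok_wnest (a' := 0) (pw' := 0) delayR gapsL gt0L cardL.
  by rewrite !muln0.
split; rewrite ?wouts_wnest //.
- move: last lastL; case: (wfinal 0 0 (wnest tL tR)) => a w.
  by case: (wfinal 0 0 tL) => aL wL /=; rewrite !mulSn; lia.
- rewrite -size_eq0 size_allpairs muln_eq0 !size_eq0.
  by rewrite negb_or outsL outsR.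
- by apply/all_allpairsP => p q _ q_R /=; rewrite addn_gt0 (allP gt0R q q_R) orbT.
- apply/all_allpairsP => p q p_L q_R /=.
  rewrite (leq_trans (leq_card_setU p.1 q.1)) //.
  by rewrite leq_add ?(allP cardL p p_L) ?(allP cardR q q_R).
Qed.

Lemma delay_bounded_unweight m (B : nat -> nat) t :
  (forall n, 2 * m * n.+1 <= B n) -> wdelay m t ->
  all (fun p : {set X} * nat => p.2 <= #|p.1|.+1) (wouts t) ->
  delay_bounded B (unweight t).
Proof.
move=> le_B [gaps last _ _ _] w_le; rewrite /delay_bounded.
have le_2m n k : k <= n.+2 -> m * k <= B n.
  move=> le_k; apply: leq_trans (le_B n); rewrite -mulnA mulnCA leq_mul2l.
  by apply/orP; right; lia.
suff gaps_from a pw prev : wgaps_ok m a pw t ->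
    (wfinal a pw t).1 <= m * (wfinal a pw t).2 -> pw <= prev.+1 ->
    gaps_ok B a prev (unweight t).
  exact: gaps_from gaps last (leq0n 1).
elim: t a pw prev w_le {gaps last} => [|[|A w] t IH] a pw prev //=.
- by move=> _ _ /= last le_pw; apply: leq_trans last (le_2m _ _ (leqW le_pw)).
- exact: IH.
move=> /andP[le_w w_le] /andP[gap_ok t_ok] last le_pw.
rewrite (IH _ w) // andbT; apply: leq_trans gap_ok (le_2m _ _ _); lia.
Qed.

End WeightedTraces.

Arguments WTick {X}.

Lemma subtree_at_rcons (X : finType) (t : vtree X) p b :
  subtree_at t (rcons p b) =
  if subtree_at t p is Some (VNode l r) then Some (if b then r else l) else None.
Proof. by elim: p t => [|c p IH] [L|l r] //=; case: b; [case: r|case: l]. Qed.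

Lemma lchild_neq_rchild p : lchild p != rchild p.
Proof. by apply/eqP => /(congr1 (last false)); rewrite !last_rcons. Qed.

Lemma prefix_lchild_rchild (p s : seq bool) :
  prefix (lchild p) s -> prefix (rchild p) s -> False.
Proof.
rewrite !prefixE !size_rcons => /eqP -> /eqP.
exact/eqP/lchild_neq_rchild.
Qed.

Lemma disjoint_bigcup_seq (X : finType) (s1 s2 : seq {set X}) :
  allrel (fun A B : {set X} => [disjoint A & B]) s1 s2 ->
  [disjoint \bigcup_(A <- s1) A & \bigcup_(B <- s2) B].
Proof.
move=> /allrelP disj; rewrite !bigcup_seq.
apply: bigcup_disjoint => B B_s2; rewrite disjoint_sym.
by apply: bigcup_disjoint => A A_s1; rewrite disjoint_sym disj.
Qed.

Lemma acyclic_path_uniq (T : finType) (e : rel T) :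
  (forall x y, e x y -> ~~ connect e y x) -> forall x p, path e x p -> uniq (x :: p).
Proof.
move=> acyclic x p; elim: p x => [|y p IH] x // /andP[e_xy y_p].
rewrite cons_uniq IH // andbT; apply/negP => x_p.
by have := acyclic x y e_xy; rewrite (path_connect y_p x_p).
Qed.

Lemma pairwise_disjoint_subtree (X : finType) (t u : vtree X) p :
  pairwise (fun A B : {set X} => [disjoint A & B]) (vleaves t) ->
  subtree_at t p = Some u -> pairwise (fun A B : {set X} => [disjoint A & B]) (vleaves u).
Proof.
elim: p t => [|b p IH] [L|l r] //= disj; [by case=> <-|by case=> <-|].
apply: IH; move: disj; rewrite pairwise_cat => /and3P[_ ? ?]; by case: b.
Qed.

Lemma leq_add_exclusive (a b c : bool) : (a -> c) -> (b -> c) -> ~~ (a && b) -> a + b <= c.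
Proof. by case: a b c => [] [] [] // /(_ isT). Qed.

Section Enumeration.
Variables (G X : finType) (C : set_circuit G X) (t : vtree X) (sigma : G -> seq bool).
Hypotheses (wfC : wf_circuit C) (vtC : vtree_for C t) (stC : structuring C t sigma).

Fixpoint wvisit (n : nat) (h : G) : seq (wevent X) :=
  if n is n'.+1 then
    bracket (match mu C h with
             | GUnion => flatten [seq wvisit n' h' | h' <- enum (fun h' => wire C h' h)]
             | GVar => let s := svar C h in
                       rcons (nseq #|s| WTick) (WOut s (#|s| + (s == set0)))
             | GTimes => match left_input C sigma h, right_input C sigma h with
                         | Some gL, Some gR => wnest (wvisit n' gL) (wvisit n' gR)
                         | _, _ => [::]
                         end
             | _ => [::]
             end)
  else [::].

Lemma unweight_wvisit n h : unweight (wvisit n h) = visit C sigma n h.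
Proof.
elim: n h => [|n IH] h //=; rewrite /unweight map_cat /= -/(unweight _).
congr (_ :: _ ++ _); case: (mu C h) => //=.
- by rewrite /unweight map_rcons map_nseq.
- case: (left_input C sigma h) => [gL|] //; case: (right_input C sigma h) => [gR|] //.
  by rewrite unweight_wnest !IH.
- by rewrite /unweight map_flatten -map_comp; congr flatten; apply: eq_map => h'; apply: IH.
Qed.

Lemma left_inputP h g :
  left_input C sigma h = Some g -> wire C g h /\ sigma g = lchild (sigma h).
Proof. by rewrite /left_input; case: pickP => // g' /andP[? /eqP ?] [<-]. Qed.

Lemma right_inputP h g :
  right_input C sigma h = Some g -> wire C g h /\ sigma g = rchild (sigma h).
Proof. by rewrite /right_input; case: pickP => // g' /andP[? /eqP ?] [<-]. Qed.

Lemma times_inputs h : mu C h = GTimes ->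
  exists gL gR, [/\ left_input C sigma h = Some gL, right_input C sigma h = Some gR,
                    gL != gR & inputs C h = [set gL; gR]].
Proof.
move=> times_h; have [_ _ _ st_times] := stC; have [_ _ _ [wf_times _] _] := wfC.
have [gL [gR [wire_L wire_R sigma_L sigma_R]]] := st_times h times_h.
have neq_LR : gL != gR.
  by apply: contraNneq (lchild_neq_rchild (sigma h)) => eq_LR; rewrite -sigma_L -sigma_R eq_LR.
have inputsE : inputs C h = [set gL; gR].
  apply/esym/eqP; rewrite eqEcard cards2 neq_LR wf_times // leqnn andbT.
  by apply/subsetP => x /set2P[] ->; rewrite inE.
have input_cases x : wire C x h -> x = gL \/ x = gR.
  by move=> wire_x; apply/set2P; rewrite -inputsE inE.
exists gL, gR; split => //.
- rewrite /left_input; case: pickP => [x /andP[/input_cases[]-> // /eqP]|none].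
    by rewrite sigma_R => /eqP; rewrite eq_sym (negbTE (lchild_neq_rchild _)).
  by have := none gL; rewrite wire_L sigma_L eqxx.
- rewrite /right_input; case: pickP => [x /andP[/input_cases[]-> // /eqP]|none].
    by rewrite sigma_L => /eqP; rewrite (negbTE (lchild_neq_rchild _)).
  by have := none gR; rewrite wire_R sigma_R eqxx.
Qed.

Lemma captures_var h S : mu C h = GVar -> captures C h S <-> S = svar C h.
Proof.
move=> var_h; split=> [cap|->]; last exact: capt_var.
by case: cap var_h => [//|g ->|g g1 g2 S1 S2 ->|g c S' ->].
Qed.

Lemma captures_union h S : mu C h = GUnion ->
  captures C h S <-> exists2 c, wire C c h & captures C c S.
Proof.
move=> union_h; split=> [cap|[c wire_c cap_c]]; last exact: capt_union wire_c cap_c.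
case: cap union_h => [g ->|g ->|g g1 g2 S1 S2 ->|g c S' _ wire_c cap_c _] //.
by exists c.
Qed.

Lemma captures_times h gL gR S : mu C h = GTimes -> gL != gR ->
  inputs C h = [set gL; gR] ->
  captures C h S <-> exists S1 S2, [/\ captures C gL S1, captures C gR S2 & S = S1 :|: S2].
Proof.
move=> times_h neq_LR inputsE.
have wire_inputs x : wire C x h = (x \in [set gL; gR]) by rewrite -inputsE inE.
split=> [cap|[S1 [S2 [cap1 cap2 ->]]]]; last first.
  by apply: capt_times cap1 cap2; rewrite ?wire_inputs ?set21 ?set22.
case: cap times_h wire_inputs
  => [g ->|g ->|g g1 g2 S1 S2 _ + + neq_12 cap1 cap2 _|g c S' ->] //.
move=> + + wire_inputs; rewrite !wire_inputs => /set2P g1E /set2P g2E.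
case: g1E g2E cap1 cap2 neq_12 => -> [] -> cap1 cap2; rewrite ?eqxx // => _.
  by exists S1, S2.
by exists S2, S1; rewrite setUC.
Qed.

Lemma prefix_sigma_wire c h : wire C c h -> prefix (sigma h) (sigma c).
Proof.
have [_ _ st_wire _] := stC.
by case/st_wire => [->|[_ [->|->]]]; rewrite ?prefix_refl ?prefix_rcons.
Qed.

Definition vlabel (p : seq bool) : {set X} :=
  if subtree_at t p is Some u then \bigcup_(L <- vleaves u) L else set0.

Lemma vlabel_wire c h : wire C c h -> vlabel (sigma c) \subset vlabel (sigma h).
Proof.
have [_ _ st_wire _] := stC.
case/st_wire => [->|[_ [->|->]]]; rewrite ?subxx // /vlabel subtree_at_rcons.
  by case: subtree_at => [[L|l r]|]; rewrite ?sub0set //= big_cat subsetUl.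
by case: subtree_at => [[L|l r]|]; rewrite ?sub0set //= big_cat subsetUr.
Qed.

Lemma svar_sub_vlabel h : mu C h = GVar -> svar C h \subset vlabel (sigma h).
Proof.
have [_ st_var _ _] := stC.
by case/st_var => L [leaf_h sub_L]; rewrite /vlabel leaf_h /= big_seq1.
Qed.

Lemma disjoint_vlabel_children p : [disjoint vlabel (lchild p) & vlabel (rchild p)].
Proof.
rewrite /vlabel !subtree_at_rcons.
case sub_p: subtree_at => [[L|l r]|]; rewrite -?setI_eq0 ?set0I //.
have disj_t : pairwise (fun A B : {set X} => [disjoint A & B]) (vleaves t).
  apply/(pairwiseP set0) => i j; rewrite !inE => i_lt j_lt lt_ij.
  by apply: vtC.1; rewrite lt_ij.
have := pairwise_disjoint_subtree disj_t sub_p; rewrite /= pairwise_cat.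
by case/and3P=> /disjoint_bigcup_seq; rewrite setI_eq0.
Qed.

Definition empty_var_below (h : G) : bool :=
  [exists v, [&& mu C v == GVar, svar C v == set0 & prefix (sigma h) (sigma v)]].

Lemma empty_var_below_wire c h : wire C c h -> empty_var_below c -> empty_var_below h.
Proof.
move=> wire_c /existsP[v /and3P[var_v empty_v pre_v]]; apply/existsP; exists v.
by rewrite var_v empty_v (prefix_trans (prefix_sigma_wire wire_c)).
Qed.

Lemma empty_var_below_children h gL gR :
  sigma gL = lchild (sigma h) -> sigma gR = rchild (sigma h) ->
  ~~ (empty_var_below gL && empty_var_below gR).
Proof.
have [_ svar_inj _ _ _] := wfC.
move=> sigma_L sigma_R; apply/andP => -[/existsP[v /and3P[/eqP var_v /eqP empty_v pre_v]]].
move=> /existsP[v' /and3P[/eqP var_v' /eqP empty_v' pre_v']].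
rewrite (svar_inj v v') ?empty_v ?empty_v' // in pre_v.
by apply: (prefix_lchild_rchild (p := sigma h) (s := sigma v')); rewrite -?sigma_L -?sigma_R.
Qed.

Definition weight_ok (h : G) (p : {set X} * nat) : bool :=
  (p.1 \subset vlabel (sigma h)) && (p.2 <= #|p.1| + empty_var_below h).

Lemma weight_ok_wire c h p : wire C c h -> weight_ok c p -> weight_ok h p.
Proof.
move=> wire_c /andP[sub_c le_w]; apply/andP; split.
  exact: subset_trans sub_c (vlabel_wire wire_c).
apply: leq_trans le_w _; rewrite leq_add2l.
by case: (empty_var_below c) (@empty_var_below_wire c h wire_c) => // /(_ isT) ->.
Qed.

Lemma weight_ok_product h gL gR p q :
  left_input C sigma h = Some gL -> right_input C sigma h = Some gR ->
  weight_ok gL p -> weight_ok gR q -> weight_ok h (p.1 :|: q.1, p.2 + q.2).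
Proof.
case/left_inputP=> wire_L sigma_L /right_inputP[wire_R sigma_R].
move=> /andP[sub_L le_p] /andP[sub_R le_q]; apply/andP; split.
  rewrite subUset (subset_trans sub_L (vlabel_wire wire_L)).
  exact: subset_trans sub_R (vlabel_wire wire_R).
have disj : [disjoint p.1 & q.1].
  apply: disjointWl sub_L (disjointWr sub_R _).
  by rewrite sigma_L sigma_R disjoint_vlabel_children.
have card_pq : #|p.1 :|: q.1| = #|p.1| + #|q.1|.
  by apply/eqP; rewrite (leq_card_setU p.1 q.1).2.
have := leq_add_exclusive (empty_var_below_wire wire_L) (empty_var_below_wire wire_R)
  (empty_var_below_children sigma_L sigma_R).
by rewrite /= card_pq; lia.
Qed.

Lemma wvisit_weight_ok n h : all (weight_ok h) (wouts (wvisit n h)).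
Proof.
elim: n h => [|n IH] h //; rewrite wouts_bracket.
case mu_h: (mu C h) => //=.
- rewrite -cats1 wouts_cat wouts_ticks /= andbT /weight_ok svar_sub_vlabel //=.
  case: eqP => [empty_h|_]; last by rewrite addn0 leq_addr.
  rewrite leq_add2l lt0b; apply/existsP; exists h.
  by rewrite mu_h empty_h !eqxx prefix_refl.
- case left_h: (left_input C sigma h) => [gL|] //; case right_h: right_input => [gR|] //.
  rewrite wouts_wnest; apply/all_allpairsP => p q p_L q_R.
  by apply: weight_ok_product (allP (IH gL) p p_L) (allP (IH gR) q q_R).
- rewrite wouts_flatten -map_comp; apply/allP => p /flattenP[_ /mapP[c + ->] p_c].
  by rewrite mem_enum => wire_c; apply: weight_ok_wire wire_c (allP (IH c) p p_c).
Qed.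

Definition height_le (h : G) (k : nat) : Prop :=
  forall g p, path (wire C) g p -> last g p = h -> size p <= k.

Lemma height_le_wire h k c : height_le h k -> wire C c h -> 0 < k /\ height_le c k.-1.
Proof.
move=> height_h wire_c; split; first by have := height_h c [:: h]; rewrite /= wire_c; apply.
move=> g p path_p last_p; have := height_h g (rcons p h).
by rewrite rcons_path path_p last_p wire_c last_rcons size_rcons => /(_ isT erefl); lia.
Qed.

Lemma wire_nonconst c h : wire C c h -> mu C c \notin [:: GTop; GBot].
Proof. by have [_ _ _ _ wf_const] := wfC; apply: contraTN => /wf_const ->. Qed.

Lemma union_has_input h : mu C h = GUnion -> enum (fun c => wire C c h) != [::].
Proof.
have [_ _ _ [_ wf_union] _] := wfC.
move=> /wf_union /card_gt0P[c]; rewrite inE => wire_c.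
apply/eqP => enum_nil; have := mem_enum (fun c => wire C c h) c.
by rewrite enum_nil in_nil unfold_in /= wire_c.
Qed.

Lemma wvisit_captures n h k : height_le h k -> k < n -> mu C h \notin [:: GTop; GBot] ->
  forall S, S \in map fst (wouts (wvisit n h)) <-> captures C h S.
Proof.
elim: n h k => // n IH h k height_h lt_kn nonconst_h.
have IH_input c : wire C c h ->
    forall S, S \in map fst (wouts (wvisit n c)) <-> captures C c S.
  move=> wire_c; have [k_gt0 height_c] := height_le_wire height_h wire_c.
  by apply: IH height_c _ (wire_nonconst wire_c); lia.
move=> S; rewrite wouts_bracket; case mu_h: (mu C h) nonconst_h => //= _.
- by rewrite captures_var // -cats1 wouts_cat wouts_ticks inE; split => /eqP.
- have [gL [gR [left_h right_h neq_LR inputsE]]] := times_inputs mu_h.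
  have [[wire_L _] [wire_R _]] := (left_inputP left_h, right_inputP right_h).
  rewrite left_h right_h (captures_times _ mu_h neq_LR inputsE) wouts_wnest; split.
    case/mapP=> _ /allpairsP[[p q] [p_L q_R ->]] ->; exists p.1, q.1.
    by split; [apply/(IH_input gL wire_L)/map_f|apply/(IH_input gR wire_R)/map_f|].
  case=> S1 [S2 [/(IH_input gL wire_L)/mapP[p p_L ->]]].
  move=> /(IH_input gR wire_R)/mapP[q q_R ->] ->.
  by apply/mapP; exists (p.1 :|: q.1, p.2 + q.2) => //; apply/allpairsP; exists (p, q).
- rewrite captures_union // wouts_flatten -map_comp; split.
    case/mapP=> p /flattenP[_ /mapP[c + ->] p_c] ->; rewrite mem_enum => wire_c.
    by exists c => //; apply/(IH_input c wire_c)/map_f.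
  case=> c wire_c /(IH_input c wire_c)/mapP[p p_c ->]; apply: map_f.
  apply/flattenP; exists (wouts (wvisit n c)) => //.
  by apply/mapP; exists c; rewrite ?mem_enum.
Qed.

Lemma wvisit_delay n h k : height_le h k -> k < n -> mu C h \notin [:: GTop; GBot] ->
  wdelay (3 * k + 2) (wvisit n h).
Proof.
elim: n h k => // n IH h k height_h lt_kn nonconst_h.
have IH_input c : wire C c h -> 0 < k /\ wdelay (3 * k.-1 + 2) (wvisit n c).
  move=> wire_c; have [k_gt0 height_c] := height_le_wire height_h wire_c.
  by split; last apply: IH height_c _ (wire_nonconst wire_c); lia.
rewrite addn2; apply: wdelay_bracket; case mu_h: (mu C h) nonconst_h => //= _.
- apply: wdelay_mono (wdelay_out (m := 1) _ _ _); rewrite ?mul1n ?leq_addr //.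
  by case: eqP => [->|/eqP]; rewrite ?cards0 // addn0 card_gt0.
- have [gL [gR [left_h right_h _ _]]] := times_inputs mu_h; rewrite left_h right_h.
  have [[wire_L _] [wire_R _]] := (left_inputP left_h, right_inputP right_h).
  have [[k_gt0 delay_L] [_ delay_R]] := (IH_input _ wire_L, IH_input _ wire_R).
  by apply: wdelay_mono (wdelay_wnest delay_L delay_R); lia.
- apply: wdelay_flatten (union_has_input mu_h) _ => c; rewrite mem_enum => wire_c.
  by have [k_gt0 delay_c] := IH_input c wire_c; apply: wdelay_mono delay_c; lia.
Qed.

Lemma depth_lt_card d : is_depth C d -> d < #|G|.
Proof.
have [acyclic _ _ _ _] := wfC.
case=> [[g [p [path_p <-]]] _].
have /card_uniqP card_gp := acyclic_path_uniq (fun x y => acyclic y x) path_p.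
by have := max_card (mem (g :: p)); rewrite card_gp.
Qed.

End Enumeration.

Theorem proposition4p2 :
  exists c : nat,
  forall (G X : finType) (C : set_circuit G X) (t : vtree X)
         (sigma : G -> seq bool) (d : nat) (g : G),
    wf_circuit C -> vtree_for C t -> structuring C t sigma ->
    is_depth C d -> mu C g = GUnion ->
    (forall S : {set X}, S \in outputs (Enum C sigma g) <-> captures C g S) /\
    delay_bounded (fun n => c * d.+1 * n.+1) (Enum C sigma g).
Proof.
exists 6 => G X C t sigma d g wfC vtC stC depth_d union_g.
have height_g : height_le C g d by case: depth_d => _ bound g' p path_p _; apply: bound path_p.
have lt_d := depth_lt_card wfC depth_d.
have nonconst_g : mu C g \notin [:: GTop; GBot] by rewrite union_g.
rewrite /Enum -unweight_wvisit outputs_unweight; split.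
  exact: (wvisit_captures wfC stC height_g lt_d nonconst_g).
apply: (delay_bounded_unweight _ (wvisit_delay wfC stC height_g lt_d nonconst_g)).
  by move=> n; rewrite leq_mul2r; apply/orP; right; lia.
apply/allP => p /(allP (wvisit_weight_ok wfC vtC stC _ _)) /andP[_ /leq_trans]; apply.
by rewrite -addn1 leq_add2l leq_b1.
Qed.
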